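(* Let $K$ be a positive semiring and let $R$ and $S$ be $K$-relations over finite sets of attributes $X$ and $Y$, and put $Z=X\cap Y$. Then for every $r\in R'\ltimes S'$ we have $(R\Join S)[X](r)=c^*_{S,Z}\,R(r)$.
   Context: A commutative semiring $(K,+,\cdot,0,1)$ with $0\neq 1$ is positive if $a+b=0$ implies $a=b=0$, and $ab=0$ implies $a=0$ or $b=0$. Each attribute $A$ has a domain $\mathrm{Dom}(A)$. For a finite set of attributes $X$, $\mathrm{Tup}(X)$ is the set of maps assigning to each $A\in X$ an element of $\mathrm{Dom}(A)$; for $Y\subseteq X$, $t[Y]$ is the restriction of $t$ to $Y$; $XY$ denotes $X\cup Y$. A $K$-relation over $X$ is a map $R:\mathrm{Tup}(X)\to K$ with finite support $R'=\{t: R(t)\neq 0\}$. For $Y\subseteq X$, the marginal $R[Y]$ is the $K$-relation over $Y$ with $R[Y](u)=\sum_{r\in R',\, r[Y]=u} R(r)$. For a $K$-relation $T$ over $Y$, $Z\subseteq Y$ and $u\in\mathrm{Tup}(Z)$, set $c^*_{T,Z}=\prod_{v\in T[Z]'}T[Z](v)$ and $c_T(u)=\prod_{v\in T[Z]',\, v\neq u}T[Z](v)$ (empty products equal $1$). The join of $K$-relations $R$ over $X$ and $S$ over $Y$ is the $K$-relation over $XY$ defined by $(R\Join S)(t)=R(t[X])\,S(t[Y])\,c_S(t[X\cap Y])$, with $Z=X\cap Y$. For ordinary relations $P\subseteq\mathrm{Tup}(X)$, $Q\subseteq\mathrm{Tup}(Y)$, $P\Join Q$ is the set of $t\in\mathrm{Tup}(XY)$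 with $t[X]\in P$ and $t[Y]\in Q$, and the semijoin is $P\ltimes Q=\{t[X]: t\in P\Join Q\}$. *)

From HB Require Import structures.
From mathcomp Require Import all_boot all_order all_algebra.
From mathcomp Require Import finmap.
Set Implicit Arguments. Unset Strict Implicit. Unset Printing Implicit Defensive.
Import GRing.Theory.
Local Open Scope fset_scope.
Local Open Scope fmap_scope.
Local Open Scope ring_scope.

(* A commutative semiring with 0 <> 1 is a comNzSemiRingType; positivity: *)
Definition positive_semiring (K : comNzSemiRingType) : Prop :=
  (forall a b : K, a + b = 0 -> a = 0 /\ b = 0) /\
  (forall a b : K, a * b = 0 -> a = 0 \/ b = 0).

Section KRel.
Variables (Att V : choiceType) (Dom : Att -> {pred V}).

(* Tuples are finite maps from attributes to values; t is a tuple over X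
   (t in Tup(X)) iff its domain is exactly X and each value lies in the
   domain of its attribute. Restriction t[Y] is t.[& Y]. *)
Definition is_tuple (X : {fset Att}) (t : {fmap Att -> V}) : bool :=
  (domf t == X) && [forall k : domf t, t k \in Dom (val k)].

Variable K : comNzSemiRingType.

Record krel (X : {fset Att}) := KRel {
  krel_fun :> {fsfun {fmap Att -> V} -> K with 0};
  krel_supp : forall t, t \in finsupp krel_fun -> is_tuple X t }.

Definition supp (f : {fsfun {fmap Att -> V} -> K with 0}) := finsupp f.

Definition marg (T : {fsfun {fmap Att -> V} -> K with 0}) (Z : {fset Att})
  : {fsfun {fmap Att -> V} -> K with 0} :=
  [fsfun u in [fset r.[& Z] | r in finsupp T] =>
     \sum_(r <- finsupp T | r.[& Z] == u) T r | 0].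

Definition cstar (T : {fsfun {fmap Att -> V} -> K with 0}) (Z : {fset Att}) : K :=
  \prod_(v <- finsupp (marg T Z)) marg T Z v.

Definition cfac (T : {fsfun {fmap Att -> V} -> K with 0}) (Z : {fset Att})
  (u : {fmap Att -> V}) : K :=
  \prod_(v <- finsupp (marg T Z) | v != u) marg T Z v.

(* The join: (R |><| S)(t) = R(t[X]) S(t[Y]) c_S(t[X cap Y]) for t in Tup(XY).
   It is represented as a finitely supported function whose value is given by
   this formula on every gluing r + s = catf r s (r in R', s in S') and 0 elsewhere
   (on tuples of XY that are not such gluings the formula is 0 anyway). *)
Definition kjoin (X Y : {fset Att})
  (R S : {fsfun {fmap Att -> V} -> K with 0}) :
  {fsfun {fmap Att -> V} -> K with 0} :=
  [fsfun t in [fset (catf r s : {fmap Att -> V}) | r in finsupp R, s in finsupp S] =>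
     R t.[& X] * S t.[& Y] * cfac S (X `&` Y) t.[& X `&` Y] | 0].

Definition rjoin (X Y : {fset Att}) (P Q : {pred {fmap Att -> V}})
  (t : {fmap Att -> V}) : Prop :=
  is_tuple (X `|` Y) t /\ t.[& X] \in P /\ t.[& Y] \in Q.

Definition in_semijoin (X Y : {fset Att}) (P Q : {pred {fmap Att -> V}})
  (r : {fmap Att -> V}) : Prop :=
  exists t, rjoin X Y P Q t /\ r = t.[& X].

End KRel.

(* Let r be in the semijoin R' |>< S', and u := r[Z] with Z = X cap Y.  The
   tuples t of the join support with t[X] = r are exactly the gluings r + s of
   r with the tuples s in S' that agree with r on Z (s[Z] = u), and
   (R |><| S)(r + s) = R(r) S(s) c_S(u).  Summing over this fiber gives
       (R |><| S)[X](r) = R(r) c_S(u) sum_{s in S', s[Z] = u} S(s)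
                        = R(r) c_S(u) S[Z](u)  =  c*_{S,Z} R(r),
   the last step because u lies in the support of S[Z], so that c*_{S,Z}
   splits as S[Z](u) c_S(u).  Positivity of K is used twice: the gluings
   r + s really lie in the join support (a product of nonzero elements is
   nonzero) and S[Z](u) <> 0 (a sum of nonzero elements is nonzero). *)
From HB Require Import structures.
From mathcomp Require Import all_boot all_order all_algebra.
From mathcomp Require Import finmap.
Set Implicit Arguments. Unset Strict Implicit. Unset Printing Implicit Defensive.
Local Open Scope fset_scope.
Local Open Scope fmap_scope.
Local Open Scope ring_scope.
Import GRing.Theory.

Section PositiveSemiring.
Variables (K : comNzSemiRingType) (HK : positive_semiring K).

Lemma padd_eq0 (a b : K) : (a + b == 0) = (a == 0) && (b == 0).
Proof.
apply/eqP/andP => [/(proj1 HK) [-> ->] | [/eqP-> /eqP->]]; last by rewrite addr0.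
by split.
Qed.

Lemma pmul_eq0 (a b : K) : (a * b == 0) = (a == 0) || (b == 0).
Proof.
apply/eqP/orP => [/(proj2 HK) [->|->] | [/eqP->|/eqP->]];
  by [left | right | rewrite mul0r | rewrite mulr0].
Qed.

Lemma pprod_neq0 (I : eqType) (s : seq I) (P : pred I) (F : I -> K) :
  (forall i, i \in s -> P i -> F i != 0) -> \prod_(i <- s | P i) F i != 0.
Proof.
move=> nzF; rewrite big_seq_cond.
elim/big_rec: _ => [|i x /andP[si Pi] x0]; first exact: oner_neq0.
by rewrite pmul_eq0 negb_or nzF.
Qed.

Lemma psum_neq0 (I : eqType) (s : seq I) (P : pred I) (F : I -> K) (i0 : I) :
  i0 \in s -> P i0 -> (forall i, i \in s -> P i -> F i != 0) ->
  \sum_(i <- s | P i) F i != 0.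
Proof.
move=> + Pi0; elim: s => // a s IH; rewrite inE big_cons => /orP[/eqP<-|si0] nzF.
  by rewrite Pi0 padd_eq0 negb_and nzF ?mem_head.
have nzFs : forall i, i \in s -> P i -> F i != 0.
  by move=> i si; apply: nzF; rewrite inE si orbT.
have sum_s := IH si0 nzFs.
by case: ifP => _; rewrite ?padd_eq0 ?negb_and sum_s ?orbT.
Qed.

End PositiveSemiring.

Section Gluing.
Variables (A : choiceType) (V : Type).
Implicit Types (r s t : {fmap A -> V}) (X Y : {fset A}).

Lemma restrictf_meetl t X Y : t.[& X].[& X `&` Y] = t.[& X `&` Y].
Proof. by rewrite restrictf_comp fsetKIid. Qed.

Lemma restrictf_meetr t X Y : t.[& Y].[& X `&` Y] = t.[& X `&` Y].
Proof. by rewrite restrictf_comp fsetKIidC. Qed.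

Lemma catf_restrictr r s : (catf r s).[& domf s] = s.
Proof.
apply/fmapP => k; rewrite fnd_restrict fnd_cat.
by case ks: (k \in domf s) => //; rewrite not_fnd ?ks.
Qed.

Lemma catf_restrictl r s :
  r.[& domf r `&` domf s] = s.[& domf r `&` domf s] -> (catf r s).[& domf r] = r.
Proof.
move=> rs; apply/fmapP => k; rewrite fnd_restrict fnd_cat.
case kr: (k \in domf r); last by rewrite not_fnd ?kr.
case: ifP => // ks; move: rs => /(congr1 (fun f : {fmap A -> V} => f.[? k])).
by rewrite !fnd_restrict in_fsetI kr ks.
Qed.

Lemma catf_restrict_domf r s : catf (catf r s).[& domf r] s = catf r s.
Proof.
apply/fmapP => k; rewrite !fnd_cat fnd_restrict fnd_cat.
case: ifP => // ks; rewrite ks.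
by case kr: (k \in domf r) => //; rewrite not_fnd ?kr.
Qed.

End Gluing.

Section Marginals.
Variables (Att V : choiceType) (K : comNzSemiRingType).
Implicit Types (T : {fsfun {fmap Att -> V} -> K with 0}) (Z : {fset Att}).
Implicit Types (u : {fmap Att -> V}).

(* The marginal is given by its defining sum everywhere, not only on the
   image of the restriction map (elsewhere the sum is empty). *)
Lemma margE T Z u : marg T Z u = \sum_(r <- finsupp T | r.[& Z] == u) T r.
Proof.
rewrite /marg fsfun_fun; case: ifP => // /negbT uT.
rewrite big_seq_cond big_pred0 // => r; apply/andP => -[rT /eqP ru].
by case/negP: uT; apply/imfsetP; exists r.
Qed.

Lemma cstar_cfac T Z u :
  u \in finsupp (marg T Z) -> cstar T Z = marg T Z u * cfac T Z u.
Proof. by move=> uT; rewrite /cstar (bigD1_seq u) ?fset_uniq. Qed.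

Hypothesis HK : positive_semiring K.

Lemma marg_supp T Z s : s \in finsupp T -> s.[& Z] \in finsupp (marg T Z).
Proof.
move=> sT; rewrite mem_finsupp /= margE.
by apply: (psum_neq0 HK sT) => // r; rewrite mem_finsupp.
Qed.

Lemma cfac_neq0 T Z u : cfac T Z u != 0.
Proof. by apply: pprod_neq0 => // v; rewrite mem_finsupp. Qed.

End Marginals.

Lemma krel_domf (Att V : choiceType) (Dom : Att -> {pred V})
  (K : comNzSemiRingType) (X : {fset Att}) (T : krel Dom K X)
  (t : {fmap Att -> V}) : t \in finsupp T -> domf t = X.
Proof. by move/krel_supp/andP => [/eqP]. Qed.

Section JoinFiber.
Variables (Att V : choiceType) (Dom : Att -> {pred V}).
Variables (K : comNzSemiRingType) (X Y : {fset Att}).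
Variables (R : krel Dom K X) (S : krel Dom K Y).
Implicit Types (r s t : {fmap Att -> V}).
Local Notation Z := (X `&` Y).
Local Notation J := (kjoin X Y R S).

Lemma glue_restrictY r s : s \in finsupp S -> (catf r s).[& Y] = s.
Proof. by move/krel_domf <-; rewrite catf_restrictr. Qed.

Lemma glue_restrictX r s : r \in finsupp R -> s \in finsupp S ->
  r.[& Z] = s.[& Z] -> (catf r s).[& X] = r.
Proof.
move=> /krel_domf dr /krel_domf ds rs.
by rewrite -{1}dr catf_restrictl // dr ds.
Qed.

Lemma kjoin_catf r s : r \in finsupp R -> s \in finsupp S ->
  r.[& Z] = s.[& Z] -> J (catf r s) = R r * S s * cfac S Z r.[& Z].
Proof.
move=> rR sS rs; have glueX := glue_restrictX rR sS rs.
rewrite /kjoin fsfun_fun ifT; last by apply/imfset2P; exists r => //; exists s.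
by rewrite glueX glue_restrictY // -restrictf_meetl glueX.
Qed.

Lemma kjoin_fiber t : t \in finsupp J ->
  t.[& Y] \in finsupp S /\ t = catf t.[& X] t.[& Y].
Proof.
move=> tJ; have : t \in [fset (catf r s : {fmap Att -> V}) | r in finsupp R,
                                                           s in finsupp S].
  apply: contraLR tJ => tn.
  by rewrite mem_finsupp negbK /kjoin fsfun_fun (negPf tn).
case/imfset2P => r rR [s sS ->{t tJ}]; rewrite glue_restrictY //.
by rewrite -(krel_domf rR) catf_restrict_domf.
Qed.

Hypothesis HK : positive_semiring K.

Lemma marg_kjoin r : r \in finsupp R ->
  marg J X r = \sum_(s <- finsupp S | s.[& Z] == r.[& Z]) J (catf r s).
Proof.
move=> rR; rewrite margE -big_filter -[RHS]big_filter.
rewrite -(big_map (catf r) xpredT (fun t => J t)).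
apply: perm_big; apply: uniq_perm; rewrite ?filter_uniq ?fset_uniq //.
  rewrite map_inj_in_uniq ?filter_uniq ?fset_uniq // => s1 s2.
  rewrite !mem_filter => /andP[_ s1S] /andP[_ s2S]
    /(congr1 (fun t : {fmap Att -> V} => t.[& Y])).
  by rewrite !glue_restrictY.
move=> t; rewrite mem_filter; apply/andP/mapP => [[/eqP tX tJ] | [s]].
  have [tS tE] := kjoin_fiber tJ; rewrite tX in tE.
  have tZ : t.[& Y].[& Z] = r.[& Z].
    by rewrite -tX restrictf_meetl restrictf_meetr.
  by exists t.[& Y]; rewrite // mem_filter tZ eqxx.
rewrite mem_filter => /andP[/eqP sr sS] ->.
split; first by rewrite glue_restrictX.
rewrite mem_finsupp /= kjoin_catf // !(pmul_eq0 HK) !negb_or.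
by rewrite -!mem_finsupp rR sS (cfac_neq0 HK).
Qed.

End JoinFiber.

Theorem lemma5 (Att V : choiceType) (Dom : Att -> {pred V})
  (K : comNzSemiRingType) (HK : positive_semiring K)
  (X Y : {fset Att}) (R : krel Dom K X) (S : krel Dom K Y)
  (r : {fmap Att -> V}) :
  in_semijoin Dom X Y (mem (supp R)) (mem (supp S)) r ->
  marg (kjoin X Y R S) X r = cstar S (X `&` Y) * R r.
Proof.
move=> [t [[_ [rR sS]] ->{r}]]; set r := t.[& X]; set u := r.[& X `&` Y].
have su : t.[& Y].[& X `&` Y] = u by rewrite /u restrictf_meetl restrictf_meetr.
have fiber_term s : s \in finsupp S -> s.[& X `&` Y] == u ->
    kjoin X Y R S (catf r s) = R r * cfac S (X `&` Y) u * S s.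
  by move=> sS' /eqP su'; rewrite kjoin_catf // -mulrA (mulrC (S s)) mulrA.
rewrite marg_kjoin // big_seq_cond.
under eq_bigr => s /andP[sS' su'] do rewrite (fiber_term s sS' su').
(* Factoring out R(r) c_S(u) leaves S[Z](u), and c*_{S,Z} = S[Z](u) c_S(u). *)
rewrite -big_seq_cond -big_distrr /= -margE.
rewrite (cstar_cfac (marg_supp HK (X `&` Y) sS)) su.
by rewrite [LHS]mulrC [R r * _]mulrC mulrA.
Qed.
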